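(* Let $G$ be a finite undirected graph, $\tau\ge1$ an integer, and $G'$ a subgraph of $G$. Then for every edge $e\in E(G')$, $\phi_\tau(e,G)\ge\phi_\tau(e,G')$.
   Context: Graphs are finite, simple, undirected and unweighted; paths may repeat vertices and their length is the number of edges. For vertices $v,u$ of a graph $H$, $u$ is $\tau$-hop reachable from $v$ in $H$ if there is a path between them in $H$ of length at most $\tau$. $N_\tau(v,H)$ is the set of vertices $u\ne v$ that are $\tau$-hop reachable from $v$ in $H$. For an edge $e=(u,v)$ of $H$, $\Delta_\tau(e,H)=N_\tau(u,H)\cap N_\tau(v,H)$ and $\mathrm{sup}_\tau(e,H)=|\Delta_\tau(e,H)|$. The $(k,\tau)$-truss of a graph $H$ is the maximal subgraph $H'$ of $H$ such that $\mathrm{sup}_\tau(e,H')\ge k-2$ for every $e\in E(H')$ (supports computed inside $H'$) and no more edges of $H$ can be added while keeping this property. The higher-order truss number $\phi_\tau(e,H)$ of an edge $e$ of $H$ is the maximum $k$ such that $e$ belongs to the $(k,\tau)$-truss of $H$. *)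

From mathcomp Require Import all_boot.
Set Implicit Arguments. Unset Strict Implicit. Unset Printing Implicit Defensive.

Section HOT.
Variable T : finType.

Definition simple_graph (V : {set T}) (E : {set {set T}}) : Prop :=
  forall e, e \in E -> exists x y, [/\ x != y, x \in V, y \in V & e = [set x; y]].

Definition adj (E : {set {set T}}) : rel T := fun x y => [set x; y] \in E.

(* u is tau-hop reachable from v: a walk (vertices may repeat) of length <= tau *)
Definition hop_reach (tau : nat) (E : {set {set T}}) (v u : T) : bool :=
  [exists n : 'I_tau.+1, exists s : (val n).-tuple T,
     path (adj E) v s && (last v s == u)].

Definition Nhood (tau : nat) (E : {set {set T}}) (v : T) : {set T} :=
  [set u | (u != v) && hop_reach tau E v u].

Definition Delta (tau : nat) (E : {set {set T}}) (e : {set T}) : {set T} :=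
  \bigcap_(x in e) Nhood tau E x.

Definition sup (tau : nat) (E : {set {set T}}) (e : {set T}) : nat :=
  #|Delta tau E e|.

Definition truss_prop (tau k : nat) (F : {set {set T}}) : bool :=
  [forall e in F, k - 2 <= sup tau F e].

Definition is_truss (tau k : nat) (E F : {set {set T}}) : bool :=
  [&& F \subset E, truss_prop tau k F &
      [forall F' : {set {set T}},
         ((F \subset F') && (F' \subset E) && truss_prop tau k F') ==> (F' == F)]].

Definition in_truss (tau k : nat) (E : {set {set T}}) (e : {set T}) : bool :=
  [exists F : {set {set T}}, is_truss tau k E F && (e \in F)].

(* phi_tau(e,H): largest k with e in the (k,tau)-truss.  Every k with a
   nonempty truss satisfies k <= #|T| (supports are <= #|T| - 2), so the
   maximum over k < #|T|+3 is the true maximum. *)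
Definition phi (tau : nat) (E : {set {set T}}) (e : {set T}) : nat :=
  \max_(k < #|T|.+3 | in_truss tau k E e) k.

End HOT.

(* The truss property of an edge set F only involves supports computed inside
   F itself.  Hence a (k,tau)-truss of G' containing e is also an edge set of
   G with the truss property, and any maximal such edge set of G above it is a
   (k,tau)-truss of G containing e.  So every k counted in phi_tau(e,G') is
   counted in phi_tau(e,G). *)

From mathcomp Require Import all_boot.

Set Implicit Arguments.
Unset Strict Implicit.
Unset Printing Implicit Defensive.

Section TrussMonotone.
Variables (T : finType) (tau k : nat).
Implicit Types (E F : {set {set T}}) (e : {set T}).

Definition truss_candidate E : pred {set {set T}} :=
  [pred F : {set {set T}} | (F \subset E) && truss_prop tau k F].

Lemma is_truss_maxset E F :
  is_truss tau k E F = maxset (truss_candidate E) F.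
Proof.
apply/and3P/maxsetP => /= [[sFE tF /forallP maxF] | [/andP [sFE tF] maxF]].
  split=> [|G /andP [sGE tG] sFG]; first exact/andP.
  by apply/eqP; have /implyP := maxF G; apply; rewrite sFG sGE.
split=> //; apply/forallP => G; apply/implyP => /andP [/andP [sFG sGE] tG].
by apply/eqP/maxF => //; apply/andP.
Qed.

Lemma in_truss_subset E' E e :
  E' \subset E -> in_truss tau k E' e -> in_truss tau k E e.
Proof.
move=> sE'E /existsP [F /andP [/and3P [sFE' tF _] eF]].
have candF : truss_candidate E F.
  by apply/andP; rewrite (subset_trans sFE' sE'E).
have [G maxG sFG] := maxset_exists candF.
by apply/existsP; exists G; rewrite is_truss_maxset maxG (subsetP sFG).
Qed.

End TrussMonotone.

Lemma phi_subset (T : finType) tau (E' E : {set {set T}}) e :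
  E' \subset E -> phi tau E' e <= phi tau E e.
Proof.
move=> sE'E; apply/bigmax_leqP => k trussE'k.
exact: (leq_bigmax_cond (F := fun k : 'I_#|T|.+3 => nat_of_ord k))
         (in_truss_subset sE'E trussE'k).
Qed.

Theorem lemma2 (T : finType) (V V' : {set T}) (E E' : {set {set T}}) (tau : nat) :
  1 <= tau ->
  simple_graph V E -> simple_graph V' E' ->
  V' \subset V -> E' \subset E ->
  forall e, e \in E' -> phi tau E' e <= phi tau E e.
Proof. by move=> _ _ _ _ sE'E e _; apply: phi_subset. Qed.
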